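(* Let $(A,+)$ be a subsemigroup of the additive semigroup $(\mathbb{R},+)$ such that $0\in A\ne\{0\}$. For every finite set $S=\{0=s_0<s_1<\dots<s_k\}\subseteq A$ there exists a finite tight set $T=\{0=t_0<t_1<\dots<t_\ell\}\subseteq A$ such that $S\subseteq T$, $t_1=s_1$ and $t_\ell=s_k$.
   Context: A finite set $T=\{0=t_0<t_1<\dots<t_\ell\}\subseteq\mathbb{R}$ of nonnegative reals is tight if $t_{i+j}\le t_i+t_j$ for all $i,j$ with $0\le i\le j\le i+j\le\ell$. *)

(* real numbers. Finite sets of reals {0 = t_0 < ... < t_l}
   are represented by their increasing enumeration as a list. *)
From Stdlib Require Import Reals List.
Import ListNotations.
Open Scope R_scope.

Definition strictly_increasing (l : list R) : Prop :=
  forall i : nat, (S i < length l)%nat -> nth i l 0 < nth (S i) l 0.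

Definition tight (t : list R) : Prop :=
  t <> [] /\ nth 0 t 0 = 0 /\ strictly_increasing t /\
  forall i j : nat, (i <= j)%nat -> (i + j < length t)%nat ->
    nth (i + j) t 0 <= nth i t 0 + nth j t 0.

From Stdlib Require Import Reals List Sorted Lra Lia.
Import ListNotations.
Open Scope R_scope.

(* Take for T all sums of (repeated) nonzero elements of S that do not exceed
   s_k.  Every summand is at least s_1 > 0, so such a sum has a bounded number
   of summands and T is finite; its least nonzero element is s_1 and its
   largest is s_k.  T is tight because it is closed under every sum that stays
   below its maximum: if t_i + t_j <= t_l then the j + 1 distinct elements
   t_i + t_0 < ... < t_i + t_j all lie in T and are at least t_i, so
   t_i + t_j is at least the (i + j)-th element of T. *)

Lemma StronglySorted_nth_lt (t : list R) : StronglySorted Rlt t ->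
  forall i j, (i < j)%nat -> (j < length t)%nat -> nth i t 0 < nth j t 0.
Proof.
  induction t as [|h r IH]; intros Hs i j Hij Hj; simpl in Hj; [lia|].
  apply StronglySorted_inv in Hs as [Hr Hh].
  destruct j as [|j]; [lia|]; destruct i as [|i]; simpl.
  - rewrite Forall_forall in Hh. apply Hh, nth_In. lia.
  - apply IH; auto; lia.
Qed.

Lemma StronglySorted_nth_le (t : list R) : StronglySorted Rlt t ->
  forall i j, (i <= j)%nat -> (j < length t)%nat -> nth i t 0 <= nth j t 0.
Proof.
  intros Hs i j Hij Hj. destruct (Nat.eq_dec i j) as [->|Hne]; [lra|].
  left. apply StronglySorted_nth_lt; auto; lia.
Qed.

Lemma StronglySorted_nth_succ_le (t : list R) (x : R) (k : nat) :
  StronglySorted Rlt t -> In x t -> (S k < length t)%nat ->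
  nth k t 0 < x -> nth (S k) t 0 <= x.
Proof.
  intros Hs Hx Hk Hlt. destruct (In_nth _ _ 0 Hx) as [q [Hq <-]].
  destruct (Compare_dec.le_lt_dec q k) as [Hqk|Hkq].
  - pose proof (StronglySorted_nth_le t Hs q k Hqk ltac:(lia)). lra.
  - apply StronglySorted_nth_le; auto; lia.
Qed.

Lemma strictly_increasing_StronglySorted (t : list R) :
  strictly_increasing t <-> StronglySorted Rlt t.
Proof.
  split.
  - intros Ht. assert (Hlt : forall k i, (i + S k < length t)%nat ->
      nth i t 0 < nth (i + S k) t 0).
    { induction k as [|k IH]; intros i Hi.
      - rewrite Nat.add_1_r. apply Ht. lia.
      - specialize (IH i ltac:(lia)). specialize (Ht (i + S k)%nat ltac:(lia)).
        replace (i + S (S k))%nat with (S (i + S k)) by lia. lra. }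
    clear Ht. induction t as [|h r IH]; constructor.
    + apply IH. intros k i Hi. apply (Hlt k (S i)). simpl; lia.
    + apply Forall_forall. intros y Hy. destruct (In_nth _ _ 0 Hy) as [p [Hp <-]].
      apply (Hlt p 0%nat). simpl; lia.
  - intros Hs i Hi. apply StronglySorted_nth_lt; auto.
Qed.

Lemma In_last (t : list R) : t <> [] -> In (last t 0) t.
Proof.
  induction t as [|h [|h' r] IH]; intros Hne; [congruence|now left|].
  right. apply IH. discriminate.
Qed.

Lemma StronglySorted_le_last (t : list R) :
  StronglySorted Rlt t -> forall x, In x t -> x <= last t 0.
Proof.
  induction t as [|h [|h' r] IH]; intros Hs x Hx; [destruct Hx| |].
  - destruct Hx as [<-|[]]. simpl; lra.
  - apply StronglySorted_inv in Hs as [Hr Hh].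
    change (last (h :: h' :: r) 0) with (last (h' :: r) 0).
    destruct Hx as [<-|Hx]; [|now apply IH].
    rewrite Forall_forall in Hh. left. apply Hh, In_last. discriminate.
Qed.

Lemma StronglySorted_insert (t : list R) (x : R) : StronglySorted Rlt t ->
  exists t', StronglySorted Rlt t' /\ forall y, In y t' <-> y = x \/ In y t.
Proof.
  induction t as [|h r IH]; intros Hs.
  - exists [x]. split; [repeat constructor|]. intro y; simpl; intuition.
  - apply StronglySorted_inv in Hs as [Hr Hh]. rewrite Forall_forall in Hh.
    destruct (Rtotal_order x h) as [Hlt|[<-|Hgt]].
    + exists (x :: h :: r). split.
      * constructor; [now constructor; [|apply Forall_forall]|].
        constructor; [lra|]. apply Forall_forall. intros y Hy. specialize (Hh y Hy). lra.
      * intro y; simpl; intuition.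
    + exists (x :: r). split; [now constructor; [|apply Forall_forall]|].
      intro y; simpl; intuition.
    + destruct (IH Hr) as [r' [Hr' Hin]]. exists (h :: r'). split.
      * constructor; auto. apply Forall_forall. intros y Hy.
        apply Hin in Hy as [->|Hy]; auto.
      * intro y. simpl. rewrite Hin. intuition.
Qed.

Lemma sorted_enumeration (l : list R) :
  exists t, StronglySorted Rlt t /\ forall y, In y t <-> In y l.
Proof.
  induction l as [|x l [t [Ht Hin]]].
  - exists []. split; [constructor|]. intro y; simpl; intuition.
  - destruct (StronglySorted_insert t x Ht) as [t' [Ht' Hin']].
    exists t'. split; auto. intro y. rewrite Hin', Hin. simpl; intuition.
Qed.

Lemma tight_of_closed_under_bounded_sums (t : list R) :
  StronglySorted Rlt t -> t <> [] -> nth 0 t 0 = 0 ->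
  (forall x y, In x t -> In y t -> x + y <= last t 0 -> In (x + y) t) ->
  tight t.
Proof.
  intros Hs Hne H0 Hcl.
  split; [auto|split; [auto|split; [now apply strictly_increasing_StronglySorted|]]].
  intros i j _ Hij.
  destruct (Rle_dec (nth i t 0 + nth j t 0) (last t 0)) as [Hle|Hgt].
  2:{ assert (nth (i + j) t 0 <= last t 0).
      { apply StronglySorted_le_last, nth_In; auto; lia. }
      lra. }
  assert (Hshift : forall m, (m <= j)%nat ->
            In (nth i t 0 + nth m t 0) t /\ nth (i + m) t 0 <= nth i t 0 + nth m t 0).
  { induction m as [|m IH]; intros Hm.
    - rewrite H0, Nat.add_0_r, Rplus_0_r. split; [apply nth_In; lia|lra].
    - destruct IH as [_ IH]; [lia|].
      assert (nth m t 0 < nth (S m) t 0) by (apply StronglySorted_nth_lt; auto; lia).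
      assert (nth (S m) t 0 <= nth j t 0) by (apply StronglySorted_nth_le; auto; lia).
      assert (Hin : In (nth i t 0 + nth (S m) t 0) t).
      { apply Hcl; try (apply nth_In; lia). lra. }
      split; [exact Hin|]. rewrite Nat.add_succ_r.
      apply StronglySorted_nth_succ_le; auto; [lia|lra]. }
  apply Hshift. lia.
Qed.

Inductive sum_of (B : list R) : nat -> R -> Prop :=
| sum_of_nil : sum_of B 0 0
| sum_of_cons n x a : sum_of B n x -> In a B -> sum_of B (S n) (x + a).

Fixpoint sums_upto (B : list R) (n : nat) : list R :=
  match n with
  | O => [0]
  | S n => sums_upto B n ++ flat_map (fun x => map (fun a => x + a) B) (sums_upto B n)
  end.

Lemma in_sums_upto (B : list R) (n : nat) (x : R) :
  In x (sums_upto B n) <-> exists m, (m <= n)%nat /\ sum_of B m x.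
Proof.
  revert x; induction n as [|n IH]; intro x; simpl.
  - split.
    + intros [<-|[]]. exists 0%nat. split; [lia|constructor].
    + intros [m [Hm Hx]]. replace m with 0%nat in Hx by lia. inversion Hx. now left.
  - rewrite in_app_iff, in_flat_map, IH. split.
    + intros [[m [Hm Hx]]|[y [Hy Hx]]]; [exists m; split; [lia|auto]|].
      apply IH in Hy as [m [Hm Hy]]. apply in_map_iff in Hx as [a [<- Ha]].
      exists (S m). split; [lia|now constructor].
    + intros [m [Hm Hx]]. destruct (Nat.eq_dec m (S n)) as [->|Hne].
      * right. inversion Hx; subst. exists x0. split.
        -- apply IH. exists n. split; auto.
        -- apply in_map_iff. eauto.
      * left. exists m. split; [lia|auto].
Qed.

Lemma sum_of_add (B : list R) m n x y :
  sum_of B m x -> sum_of B n y -> sum_of B (m + n) (x + y).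
Proof.
  intros Hx Hy. induction Hy as [|n y a Hy IH Ha].
  - now rewrite Nat.add_0_r, Rplus_0_r.
  - rewrite Nat.add_succ_r, <- Rplus_assoc. now constructor.
Qed.

Lemma sum_of_ge (B : list R) (d : R) n x :
  (forall a, In a B -> d <= a) -> sum_of B n x -> INR n * d <= x.
Proof.
  intros Hd Hx. induction Hx as [|n x a Hx IH Ha]; [simpl; lra|].
  rewrite S_INR. specialize (Hd a Ha). lra.
Qed.

Lemma sum_of_closed (P : R -> Prop) (B : list R) n x :
  (forall x y, P x -> P y -> P (x + y)) -> P 0 -> (forall a, In a B -> P a) ->
  sum_of B n x -> P x.
Proof. intros Hadd H0 HB Hx. induction Hx; auto. Qed.

Definition bounded_sums (B : list R) (L x : R) : Prop :=
  (exists n, sum_of B n x) /\ x <= L.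

Section BoundedSums.

Variables (B : list R) (d L : R).
Hypotheses (d_pos : 0 < d) (d_min : forall a, In a B -> d <= a).

Lemma bounded_sums_nonneg (x : R) : bounded_sums B L x -> 0 <= x.
Proof.
  intros [[n Hx] _]. pose proof (sum_of_ge B d n x d_min Hx). pose proof (pos_INR n). nra.
Qed.

Lemma bounded_sums_enumeration :
  exists t, StronglySorted Rlt t /\ forall x, In x t <-> bounded_sums B L x.
Proof.
  destruct (INR_unbounded (L / d)) as [K HK].
  assert (Hfew : forall n x, sum_of B n x -> x <= L -> (n <= K)%nat).
  { intros n x Hx HxL. pose proof (sum_of_ge B d n x d_min Hx).
    assert (INR n <= L / d).
    { apply (Rmult_le_reg_r d); auto. unfold Rdiv. rewrite Rmult_assoc, Rinv_l; lra. }
    apply Nat.lt_le_incl, INR_lt. lra. }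
  destruct (sorted_enumeration
              (filter (fun x => if Rle_dec x L then true else false) (sums_upto B K)))
    as [t [Ht Hin]].
  exists t. split; auto. intro x. rewrite Hin, filter_In, in_sums_upto.
  unfold bounded_sums. destruct (Rle_dec x L); split.
  - intros [[m [_ Hx]] _]. eauto.
  - intros [[m Hx] HxL]. split; eauto.
  - intros [_ Hf]. discriminate.
  - intros [_ HxL]. contradiction.
Qed.

Variable t : list R.
Hypotheses (t_sorted : StronglySorted Rlt t)
           (t_mem : forall x, In x t <-> bounded_sums B L x).

Lemma bounded_sums_member (a : R) : In a B -> a <= L -> In a t.
Proof.
  intros Ha HaL. apply t_mem. split; [|auto]. exists 1%nat.
  rewrite <- (Rplus_0_l a). constructor; [constructor|auto].
Qed.

Lemma bounded_sums_head : 0 <= L -> t <> [] /\ nth 0 t 0 = 0.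
Proof.
  intros HL. assert (H0t : In 0 t) by (apply t_mem; split; [exists 0%nat; constructor|auto]).
  split; [intros E; now rewrite E in H0t|].
  destruct (In_nth _ _ 0 H0t) as [q [Hq Hqe]].
  assert (nth 0 t 0 <= nth q t 0) by (apply StronglySorted_nth_le; auto; lia).
  assert (0 <= nth 0 t 0) by (apply (bounded_sums_nonneg _), t_mem, nth_In; lia).
  lra.
Qed.

Lemma bounded_sums_second : In d B -> d <= L -> nth 1 t 0 = d.
Proof.
  intros Hd HdL. pose proof (bounded_sums_member d Hd HdL) as Hdt.
  destruct (bounded_sums_head ltac:(lra)) as [_ H0].
  destruct (In_nth _ _ 0 Hdt) as [q [Hq Hqe]].
  assert (q <> 0%nat) by (intros ->; lra).
  assert (nth 1 t 0 <= d) by (rewrite <- Hqe; apply StronglySorted_nth_le; auto; lia).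
  assert (nth 0 t 0 < nth 1 t 0) by (apply StronglySorted_nth_lt; auto; lia).
  assert (H1t : In (nth 1 t 0) t) by (apply nth_In; lia).
  apply t_mem in H1t as [[[|n] Hn] _]; [inversion Hn; lra|].
  pose proof (sum_of_ge B d _ _ d_min Hn). rewrite S_INR in *.
  pose proof (pos_INR n). nra.
Qed.

Lemma bounded_sums_last : In L B -> last t 0 = L.
Proof.
  intros HL. pose proof (bounded_sums_member L HL (Rle_refl L)) as HLt.
  assert (t <> []) by (intros E; now rewrite E in HLt).
  assert (last t 0 <= L) by (apply t_mem, In_last; auto).
  assert (L <= last t 0) by (apply StronglySorted_le_last; auto).
  lra.
Qed.

Lemma bounded_sums_tight : In L B -> tight t.
Proof.
  intros HL. assert (0 <= L) by (pose proof (d_min L HL); lra).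
  destruct (bounded_sums_head ltac:(lra)) as [Hne H0].
  apply tight_of_closed_under_bounded_sums; auto.
  rewrite (bounded_sums_last HL).
  intros x y [[m Hx] _]%t_mem [[n Hy] _]%t_mem Hxy.
  apply t_mem. split; [exists (m + n)%nat; now apply sum_of_add|auto].
Qed.

End BoundedSums.

Theorem lemma4p3 (A : R -> Prop)
  (HAadd : forall x y : R, A x -> A y -> A (x + y))
  (HA0 : A 0)
  (HAne : exists a : R, A a /\ a <> 0)
  (s : list R)
  (Hslen : (2 <= length s)%nat)
  (Hs0 : nth 0 s 0 = 0)
  (Hsinc : strictly_increasing s)
  (HsA : forall x : R, In x s -> A x) :
  exists t : list R,
    tight t /\
    (forall x : R, In x t -> A x) /\
    (forall x : R, In x s -> In x t) /\
    nth 1 t 0 = nth 1 s 0 /\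
    last t 0 = last s 0.
Proof.
  apply strictly_increasing_StronglySorted in Hsinc as Hss.
  pose proof (StronglySorted_le_last s Hss) as HsL.
  destruct s as [|z [|d B']]; simpl in Hslen, Hs0; try lia. subst z.
  set (B := d :: B') in *. set (L := last B 0).
  apply StronglySorted_inv in Hss as [HB H0B]. rewrite Forall_forall in H0B.
  assert (d_pos : 0 < d) by (apply H0B; now left).
  assert (d_min : forall a, In a B -> d <= a).
  { apply StronglySorted_inv in HB as [_ Hd]. rewrite Forall_forall in Hd.
    intros a [<-|Ha]; [lra|now left; apply Hd]. }
  assert (HLB : In L B) by (apply In_last; discriminate).
  destruct (bounded_sums_enumeration B d L d_pos d_min) as [t [Ht Hmem]].
  exists t. split; [|split; [|split; [|split]]].
  - exact (bounded_sums_tight B d L d_pos d_min t Ht Hmem HLB).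
  - intros x [[n Hx] _]%Hmem.
    apply (sum_of_closed A B n x HAadd HA0); auto. intros a Ha. apply HsA. now right.
  - intros x Hx. pose proof (HsL x Hx).
    destruct Hx as [<-|Hx]; [|now apply (bounded_sums_member B L)].
    apply Hmem. split; [exists 0%nat; constructor|auto].
  - apply (bounded_sums_second B d L d_pos d_min t Ht Hmem); [now left|].
    apply HsL. simpl; auto.
  - exact (bounded_sums_last B L t Ht Hmem HLB).
Qed.
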